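(* Let $n\ge1$ and let $\mathcal{S}(\vec u,\vec v,\vec a,\vec d)$ be the lexicographic-order specification over $n$ variables defined below. Then the set $\mathcal{S}(\vec x,\vec x,\vec a,\vec d)\cup\{\bar d_n\ge1\}$ (obtained by substituting $x_i$ for both $u_i$ and $v_i$) propagates to a conflict by unit propagation starting from the empty assignment, using $O(n)$ propagations. Consequently, the reflexivity proof obligation $\mathcal{S}(\vec x,\vec x,\vec a,\vec d)\vdash\{d_n\ge1\}$ for the order $\mathcal{O}(\vec d)=\{d_n\ge1\}$ can be proved by a single reverse unit propagation (RUP) step requiring $O(n)$ propagations.
   Context: Literals are $x$ or $\bar x=1-x$; a PB constraint is $\sum_i c_i\ell_i\ge A$ with $c_i,A\ge0$. The specification $\mathcal{S}(\vec u,\vec v,\vec a,\vec d)$ (variables $u_1..u_n$, $v_1..v_n$, $a_1..a_{n-1}$, $d_1..d_n$) consists of: $\bar a_1+u_1+\bar v_1\ge1$; $2a_1+\bar u_1+v_1\ge2$; for $1\le i\le n-2$: $3\bar a_{i+1}+2a_i+u_{i+1}+\bar v_{i+1}\ge3$ and $2a_{i+1}+2\bar a_i+\bar u_{i+1}+v_{i+1}\ge2$; $\bar d_1+v_1+\bar u_1\ge1$; $2d_1+\bar v_1+u_1\ge2$; for $1\le i\le n-1$: $4\bar d_{i+1}+3d_i+\bar a_i+v_{i+1}+\bar u_{i+1}\ge4$ and $4d_{i+1}+3\bar d_i+a_i+\bar v_{i+1}+u_{i+1}\ge3$. After substitution, a constraint is simplified by using $x+\bar x=1$. Unit propagation: for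 a partial assignment $\rho$, the slack of $\sum_i c_i\ell_i\ge A$ is $\sum_{i:\rho(\ell_i)\ne0}c_i-A$; if it is negative the constraint is in conflict; if an unassigned literal $\ell_i$ has $c_i$ greater than the slack, $\ell_i$ is propagated to $1$ (added to $\rho$). This is repeated until a conflict or no further propagation. A constraint $C$ is derived by RUP from $F$ if unit propagation on $F\cup\{\neg C\}$ from the empty assignment reaches a conflict, where $\neg(\sum c_i\ell_i\ge A)$ is $\sum c_i\bar\ell_i\ge\sum c_i-A+1$. *)

From Stdlib Require Import List Arith ZArith.
Import ListNotations.

(* Variables: x_i (after substituting x_i for u_i and v_i), a_i, d_i (1-indexed). *)
Inductive var : Type := VX (i : nat) | VA (i : nat) | VD (i : nat).

Definition var_eq_dec (x y : var) : {x = y} + {x <> y}.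
Proof. decide equality; apply Nat.eq_dec. Defined.

Definition var_eqb (x y : var) : bool := if var_eq_dec x y then true else false.

Inductive lit : Type := Pos (x : var) | Neg (x : var).

Definition lvar (l : lit) : var := match l with Pos x => x | Neg x => x end.
Definition lneg (l : lit) : lit := match l with Pos x => Neg x | Neg x => Pos x end.

(* A PB constraint  sum_i c_i l_i >= A, with c_i, A natural numbers. *)
Definition constr : Type := (list (nat * lit) * nat)%type.

(* Simplification using x + \bar x = 1: for each variable with positive
   coefficient p (on x) and q (on \bar x), keep |p - q| on the dominant
   literal and subtract min p q from the degree (degree clamped at 0). *)
Definition pos_coef (x : var) (ts : list (nat * lit)) : nat :=
  fold_right (fun t s => match t with (c, Pos y) => if var_eqb x y then c + s else s
                                 | _ => s end) 0 ts.
Definition neg_coef (x : var) (ts : list (nat * lit)) : nat :=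
  fold_right (fun t s => match t with (c, Neg y) => if var_eqb x y then c + s else s
                                 | _ => s end) 0 ts.

Definition simplify (C : constr) : constr :=
  let ts := fst C in
  let vs := nodup var_eq_dec (map (fun t => lvar (snd t)) ts) in
  (flat_map (fun x => let p := pos_coef x ts in let q := neg_coef x ts in
                      if q <? p then [(p - q, Pos x)]
                      else if p <? q then [(q - p, Neg x)] else []) vs,
   snd C - fold_right (fun x s => Nat.min (pos_coef x ts) (neg_coef x ts) + s) 0 vs).

Definition spec (n : nat) (u v a d : nat -> var) : list constr :=
  [ ([(1, Neg (a 1)); (1, Pos (u 1)); (1, Neg (v 1))], 1);
    ([(2, Pos (a 1)); (1, Neg (u 1)); (1, Pos (v 1))], 2) ]
  ++ flat_map (fun i =>
       [ ([(3, Neg (a (i+1))); (2, Pos (a i)); (1, Pos (u (i+1))); (1, Neg (v (i+1)))], 3);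
         ([(2, Pos (a (i+1))); (2, Neg (a i)); (1, Neg (u (i+1))); (1, Pos (v (i+1)))], 2) ])
     (seq 1 (n - 2))
  ++ [ ([(1, Neg (d 1)); (1, Pos (v 1)); (1, Neg (u 1))], 1);
       ([(2, Pos (d 1)); (1, Neg (v 1)); (1, Pos (u 1))], 2) ]
  ++ flat_map (fun i =>
       [ ([(4, Neg (d (i+1))); (3, Pos (d i)); (1, Neg (a i)); (1, Pos (v (i+1))); (1, Neg (u (i+1)))], 4);
         ([(4, Pos (d (i+1))); (3, Neg (d i)); (1, Pos (a i)); (1, Neg (v (i+1))); (1, Pos (u (i+1)))], 3) ])
     (seq 1 (n - 1)).

Definition spec_xx (n : nat) : list constr := map simplify (spec n VX VX VA VD).

Definition assignment : Type := var -> option bool.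
Definition empty_assignment : assignment := fun _ => None.

Definition lit_val (rho : assignment) (l : lit) : option bool :=
  match l with Pos x => rho x | Neg x => option_map negb (rho x) end.

Definition assign (rho : assignment) (l : lit) : assignment :=
  fun y => if var_eqb y (lvar l)
           then Some (match l with Pos _ => true | Neg _ => false end)
           else rho y.

Definition slack (C : constr) (rho : assignment) : Z :=
  (Z.of_nat (fold_right (fun t s => match lit_val rho (snd t) with
                                     | Some false => s
                                     | _ => (fst t + s)%nat end) 0%nat (fst C))
   - Z.of_nat (snd C))%Z.

Inductive up_conflict (F : list constr) : assignment -> nat -> Prop :=
| UP_conflict rho C :
    In C F -> (slack C rho < 0)%Z -> up_conflict F rho 0
| UP_propagate rho C c l k :
    In C F -> In (c, l) (fst C) -> rho (lvar l) = None ->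
    (Z.of_nat c > slack C rho)%Z ->
    up_conflict F (assign rho l) k -> up_conflict F rho (S k).

(* negation: not (sum c_i l_i >= A)  is  sum c_i \bar l_i >= sum c_i - A + 1 *)
Definition neg_constr (C : constr) : constr :=
  (map (fun t => (fst t, lneg (snd t))) (fst C),
   (fold_right (fun t s => fst t + s) 0 (fst C) + 1) - snd C).

Definition rup_k (F : list constr) (C : constr) (k : nat) : Prop :=
  up_conflict (F ++ [neg_constr C]) empty_assignment k.

(* Substituting x for u and v turns the constraint 2 d_1 + ~x_1 + x_1 >= 2 into
   d_1 >= 1, and each 4 d_(i+1) + 3 ~d_i + a_i + ~x_(i+1) + x_(i+1) >= 3 into
   4 d_(i+1) + 3 ~d_i + a_i >= 2.  Unit propagation from the empty assignment
   therefore sets d_1, d_2, ..., d_n to 1 in turn (once d_i = 1 the slack of the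
   i-th of these constraints is at most 1 < 4), after which ~d_n >= 1 is
   falsified: n propagations in total.  The RUP check of d_n >= 1 is the same
   propagation, because the negation of d_n >= 1 is ~d_n >= 1. *)

From Stdlib Require Import List Arith ZArith Lia.
Import ListNotations.

Definition d_first : constr := ([(2, Pos (VD 1))], 1).

Definition d_step (i : nat) : constr :=
  ([(4, Pos (VD (i + 1))); (3, Neg (VD i)); (1, Pos (VA i))], 2).

Definition not_d (n : nat) : constr := ([(1, Neg (VD n))], 1).

Lemma simplify_d_first :
  simplify ([(2, Pos (VD 1)); (1, Neg (VX 1)); (1, Pos (VX 1))], 2) = d_first.
Proof. reflexivity. Qed.

Lemma simplify_d_step (i : nat) :
  simplify ([(4, Pos (VD (i + 1))); (3, Neg (VD i)); (1, Pos (VA i));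
             (1, Neg (VX (i + 1))); (1, Pos (VX (i + 1)))], 3) = d_step i.
Proof.
  unfold d_step.
  assert (Hji : i + 1 <> i) by lia.
  generalize (i + 1) Hji; clear Hji; intros j Hji.
  unfold simplify, pos_coef, neg_coef, var_eqb; cbn -[var_eq_dec].
  repeat (destruct var_eq_dec; try congruence; cbn -[var_eq_dec]).
  reflexivity.
Qed.

Lemma d_first_in_spec_xx (n : nat) : In d_first (spec_xx n).
Proof.
  unfold spec_xx; rewrite <- simplify_d_first; apply in_map.
  unfold spec; rewrite !in_app_iff; simpl; tauto.
Qed.

Lemma d_step_in_spec_xx (n i : nat) :
  1 <= i -> i < n -> In (d_step i) (spec_xx n).
Proof.
  intros Hi Hin.
  unfold spec_xx; rewrite <- simplify_d_step; apply in_map.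
  unfold spec; rewrite !in_app_iff; right; right; right.
  apply in_flat_map; exists i; split.
  - apply in_seq; lia.
  - simpl; tauto.
Qed.

Lemma assign_lvar (rho : assignment) (x : var) : assign rho (Pos x) x = Some true.
Proof. unfold assign, var_eqb; simpl; destruct var_eq_dec; congruence. Qed.

Lemma assign_other (rho : assignment) (l : lit) (y : var) :
  y <> lvar l -> assign rho l y = rho y.
Proof. unfold assign, var_eqb; destruct var_eq_dec; congruence. Qed.

Section DChain.

Variables (F : list constr) (n : nat).
Hypothesis d_first_in : In d_first F.
Hypothesis d_step_in : forall i, 1 <= i -> i < n -> In (d_step i) F.
Hypothesis not_d_in : In (not_d n) F.

Lemma up_conflict_d_chain (m i : nat) (rho : assignment) :
  i + m = n -> 1 <= i -> rho (VD i) = Some true ->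
  (forall j, i < j -> rho (VD j) = None) ->
  up_conflict F rho m.
Proof.
  revert i rho; induction m as [|m IH]; intros i rho Hm Hi Hdi Hfree.
  - apply (UP_conflict _ _ (not_d n)); [exact not_d_in |].
    replace n with i by lia.
    unfold slack; simpl; rewrite Hdi; simpl; lia.
  - apply (UP_propagate _ _ (d_step i) 4 (Pos (VD (i + 1)))).
    + apply d_step_in; lia.
    + simpl; tauto.
    + apply Hfree; lia.
    + unfold slack; simpl; rewrite Hdi, (Hfree (i + 1)) by lia.
      destruct (rho (VA i)) as [[|]|]; simpl; lia.
    + apply (IH (i + 1)); try lia.
      * apply assign_lvar.
      * intros j Hj; rewrite assign_other by (simpl; injection 1; lia).
        apply Hfree; lia.
Qed.

Lemma up_conflict_d_chain_empty : 1 <= n -> up_conflict F empty_assignment n.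
Proof.
  intros Hn; replace n with (S (n - 1)) by lia.
  apply (UP_propagate _ _ d_first 2 (Pos (VD 1))).
  - exact d_first_in.
  - simpl; tauto.
  - reflexivity.
  - unfold slack; simpl; lia.
  - apply (up_conflict_d_chain (n - 1) 1); try lia.
    + apply assign_lvar.
    + intros j Hj; rewrite assign_other by (simpl; injection 1; lia).
      reflexivity.
Qed.

End DChain.

Lemma up_conflict_spec_xx_not_d (n : nat) :
  1 <= n -> up_conflict (spec_xx n ++ [not_d n]) empty_assignment n.
Proof.
  apply up_conflict_d_chain_empty; intros; apply in_or_app.
  - left; apply d_first_in_spec_xx.
  - left; apply d_step_in_spec_xx; assumption.
  - right; simpl; tauto.
Qed.

Theorem lemma13 :
  exists c : nat, forall n : nat, 1 <= n ->
    (exists k, k <= c * n /\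
       up_conflict (spec_xx n ++ [([(1, Neg (VD n))], 1)]) empty_assignment k) /\
    (exists k, k <= c * n /\ rup_k (spec_xx n) ([(1, Pos (VD n))], 1) k).
Proof.
  exists 1; intros n Hn; split; exists n; split; try lia.
  - exact (up_conflict_spec_xx_not_d n Hn).
  - exact (up_conflict_spec_xx_not_d n Hn).
Qed.
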